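(* Let $L\subseteq\Sigma^*$ with $L\ne\Sigma^*$, and suppose $L$ is prefix-closed, suffix-closed, factor-closed, or subword-closed. Then: - $(L^-)^+=L^-$; - $L^+$ is closed under the same relation as $L$; - $((L^+)^-)^+=(L^+)^-$. Consequently, every language obtainable from $L$ by finitely many applications of positive closure and complement is one of $L$, $L^-$, $L^+$, $(L^+)^-$.
   Context: $L^-=\Sigma^*\setminus L$ denotes complement, and $L^+=\bigcup_{i\ge1}L^i$ denotes positive closure. A language is prefix-closed (suffix-, factor-, subword-closed) if it contains every prefix (suffix, factor, subword) of each of its words, where subword means scattered subsequence. *)

From Stdlib Require Import List.
Import ListNotations.

Definition lang (Sigma : Type) := list Sigma -> Prop.

Definition lang_eq {Sigma : Type} (L M : lang Sigma) : Prop :=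
  forall w, L w <-> M w.

Definition compl {Sigma : Type} (L : lang Sigma) : lang Sigma :=
  fun w => ~ L w.

Definition concat {Sigma : Type} (L M : lang Sigma) : lang Sigma :=
  fun w => exists u v, w = u ++ v /\ L u /\ M v.

Fixpoint lpow {Sigma : Type} (L : lang Sigma) (n : nat) : lang Sigma :=
  match n with
  | 0 => fun w => w = []
  | S n' => concat L (lpow L n')
  end.

Definition plus {Sigma : Type} (L : lang Sigma) : lang Sigma :=
  fun w => exists i, 1 <= i /\ lpow L i w.

Definition is_prefix {Sigma : Type} (u w : list Sigma) : Prop :=
  exists v, w = u ++ v.
Definition is_suffix {Sigma : Type} (u w : list Sigma) : Prop :=
  exists v, w = v ++ u.
Definition is_factor {Sigma : Type} (u w : list Sigma) : Prop :=
  exists x y, w = x ++ u ++ y.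
Inductive is_subword {Sigma : Type} : list Sigma -> list Sigma -> Prop :=
  | sw_nil : is_subword [] []
  | sw_skip : forall a u w, is_subword u w -> is_subword u (a :: w)
  | sw_keep : forall a u w, is_subword u w -> is_subword (a :: u) (a :: w).

Inductive closure_kind := Prefix | Suffix | Factor | Subword.

Definition krel {Sigma : Type} (k : closure_kind) : list Sigma -> list Sigma -> Prop :=
  match k with
  | Prefix => is_prefix
  | Suffix => is_suffix
  | Factor => is_factor
  | Subword => is_subword
  end.

Definition closed_under {Sigma : Type} (k : closure_kind) (L : lang Sigma) : Prop :=
  forall u w, L w -> krel k u w -> L u.

Inductive obtainable {Sigma : Type} (L : lang Sigma) : lang Sigma -> Prop :=
  | ob_base : obtainable L L
  | ob_plus : forall M, obtainable L M -> obtainable L (plus M)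
  | ob_compl : forall M, obtainable L M -> obtainable L (compl M).

From Stdlib Require Import List Classical Lia.
Import ListNotations.

(* Each of the four relations relates uv to at least one of u, v, so a
   k-closed language containing uv contains u or v: its complement is closed
   under concatenation, whence (L^-)^+ = L^-.  Moreover, a word related to uv
   splits as s1 s2 with s1 related to u and s2 related to v, and only [] is
   related to [], so k-closure passes from L to every L^n and hence to L^+.
   Applying the first fact to L^+ as well, and using L^++ = L^+ and
   L^-- = L, the four languages L, L^-, L^+, (L^+)^- are permuted by both
   operations. *)

Section Words.
Context {A : Type}.

Lemma is_subword_nil_l (w : list A) : is_subword [] w.
Proof. induction w; constructor; assumption. Qed.

Lemma is_subword_app_r (u v : list A) : is_subword u (u ++ v).
Proof.
  induction u as [|a u IHu]; simpl.
  - apply is_subword_nil_l.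
  - apply sw_keep, IHu.
Qed.

Lemma krel_app (k : closure_kind) (u v : list A) :
  krel k u (u ++ v) \/ krel k v (u ++ v).
Proof.
  destruct k; simpl.
  - left; exists v; reflexivity.
  - right; exists u; reflexivity.
  - left; exists [], v; reflexivity.
  - left; apply is_subword_app_r.
Qed.

Lemma closed_under_app_inv (k : closure_kind) (L : lang A) (u v : list A) :
  closed_under k L -> L (u ++ v) -> L u \/ L v.
Proof.
  intros Hclosed Huv.
  destruct (krel_app k u v); [left | right]; eapply Hclosed; eassumption.
Qed.

Lemma krel_nil_r (k : closure_kind) (s : list A) : krel k s [] -> s = [].
Proof.
  destruct k; simpl.
  - intros [v E]; symmetry in E; apply app_eq_nil in E; tauto.
  - intros [v E]; symmetry in E; apply app_eq_nil in E; tauto.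
  - intros [x [y E]]; symmetry in E; apply app_eq_nil in E.
    destruct E as [_ E]; apply app_eq_nil in E; tauto.
  - intros H; inversion H; reflexivity.
Qed.

Lemma is_prefix_app_split (s u v : list A) : is_prefix s (u ++ v) ->
  exists s1 s2, s = s1 ++ s2 /\ is_prefix s1 u /\ is_prefix s2 v.
Proof.
  intros [x E]; apply app_eq_app in E.
  destruct E as [l [[-> ->] | [-> ->]]].
  - exists s, []; rewrite app_nil_r; repeat split; [exists l | exists v]; reflexivity.
  - exists u, l; repeat split; [exists []; rewrite app_nil_r | exists x]; reflexivity.
Qed.

Lemma is_suffix_app_split (s u v : list A) : is_suffix s (u ++ v) ->
  exists s1 s2, s = s1 ++ s2 /\ is_suffix s1 u /\ is_suffix s2 v.
Proof.
  intros [x E]; apply app_eq_app in E.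
  destruct E as [l [[-> ->] | [-> ->]]].
  - exists l, v; repeat split; [exists x | exists []]; reflexivity.
  - exists [], s; repeat split; [exists u; rewrite app_nil_r | exists l]; reflexivity.
Qed.

Lemma is_factor_app_split (s u v : list A) : is_factor s (u ++ v) ->
  exists s1 s2, s = s1 ++ s2 /\ is_factor s1 u /\ is_factor s2 v.
Proof.
  intros [x [y E]].
  destruct (is_suffix_app_split (s ++ y) u v) as [t1 [t2 [Et [[a Ha] [b Hb]]]]].
  { exists x; exact E. }
  destruct (is_prefix_app_split s t1 t2) as [s1 [s2 [-> [[c Hc] [d Hd]]]]].
  { exists y; symmetry; exact Et. }
  exists s1, s2; repeat split.
  - exists a, c; subst; reflexivity.
  - exists b, d; subst; reflexivity.
Qed.

Lemma is_subword_app_split (u : list A) : forall s v, is_subword s (u ++ v) ->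
  exists s1 s2, s = s1 ++ s2 /\ is_subword s1 u /\ is_subword s2 v.
Proof.
  induction u as [|a u IHu]; simpl; intros s v H.
  - exists [], s; repeat split; [constructor | exact H].
  - inversion H as [| ? ? ? Hs | ? t ? Ht]; subst.
    + destruct (IHu s v Hs) as [s1 [s2 [-> [H1 H2]]]].
      exists s1, s2; repeat split; [apply sw_skip |]; assumption.
    + destruct (IHu t v Ht) as [s1 [s2 [-> [H1 H2]]]].
      exists (a :: s1), s2; repeat split; [apply sw_keep |]; assumption.
Qed.

Lemma krel_app_split (k : closure_kind) (s u v : list A) : krel k s (u ++ v) ->
  exists s1 s2, s = s1 ++ s2 /\ krel k s1 u /\ krel k s2 v.
Proof.
  destruct k; simpl.
  - apply is_prefix_app_split.
  - apply is_suffix_app_split.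
  - apply is_factor_app_split.
  - apply is_subword_app_split.
Qed.

Lemma lpow_closed_under (k : closure_kind) (L : lang A) :
  closed_under k L -> forall n, closed_under k (lpow L n).
Proof.
  intros Hclosed n; induction n as [|n IHn]; intros s w Hw Hsw; simpl in *.
  - subst; apply (krel_nil_r k s Hsw).
  - destruct Hw as [u [v [-> [Hu Hv]]]].
    destruct (krel_app_split k s u v Hsw) as [s1 [s2 [-> [H1 H2]]]].
    exists s1, s2; eauto.
Qed.

Lemma plus_closed_under (k : closure_kind) (L : lang A) :
  closed_under k L -> closed_under k (plus L).
Proof.
  intros Hclosed s w [i [Hi Hw]] Hsw.
  exists i; split; [exact Hi | exact (lpow_closed_under k L Hclosed i s w Hw Hsw)].
Qed.

Definition concat_closed (M : lang A) : Prop :=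
  forall u v, M u -> M v -> M (u ++ v).

Lemma plus_concat_closed_eq (M : lang A) :
  concat_closed M -> lang_eq (plus M) M.
Proof.
  intros Hcat w; split.
  - intros [[|n] [Hn Hw]]; [inversion Hn |].
    clear Hn; revert w Hw; induction n as [|n IHn]; intros w [u [v [-> [Hu Hv]]]].
    + simpl in Hv; subst; rewrite app_nil_r; exact Hu.
    + apply Hcat; [exact Hu | exact (IHn v Hv)].
  - intros Hw; exists 1; split; [constructor |].
    exists w, []; rewrite app_nil_r; repeat split; assumption.
Qed.

Lemma compl_concat_closed (k : closure_kind) (L : lang A) :
  closed_under k L -> concat_closed (compl L).
Proof.
  intros Hclosed u v Hu Hv Huv.
  destruct (closed_under_app_inv k L u v Hclosed Huv); contradiction.
Qed.

Lemma plus_compl_eq (k : closure_kind) (L : lang A) :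
  closed_under k L -> lang_eq (plus (compl L)) (compl L).
Proof. intros Hclosed; apply plus_concat_closed_eq, (compl_concat_closed k), Hclosed. Qed.

Lemma lpow_add (L : lang A) (i j : nat) (u v : list A) :
  lpow L i u -> lpow L j v -> lpow L (i + j) (u ++ v).
Proof.
  revert u; induction i as [|i IHi]; simpl; intros u Hu Hv.
  - subst; exact Hv.
  - destruct Hu as [a [b [-> [Ha Hb]]]].
    exists a, (b ++ v); rewrite app_assoc; auto.
Qed.

Lemma plus_concat_closed (L : lang A) : concat_closed (plus L).
Proof.
  intros u v [i [Hi Hu]] [j [Hj Hv]].
  exists (i + j); split; [lia |].
  apply lpow_add; assumption.
Qed.

Lemma plus_idem (L : lang A) : lang_eq (plus (plus L)) (plus L).
Proof. apply plus_concat_closed_eq, plus_concat_closed. Qed.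

Lemma lpow_mono (M N : lang A) :
  (forall w, M w -> N w) -> forall n w, lpow M n w -> lpow N n w.
Proof.
  intros Hsub n; induction n as [|n IHn]; simpl; intros w Hw; [exact Hw |].
  destruct Hw as [u [v [-> [Hu Hv]]]]; exists u, v; auto.
Qed.

Lemma plus_lang_eq (M N : lang A) : lang_eq M N -> lang_eq (plus M) (plus N).
Proof.
  intros E w; split; intros [i [Hi Hw]]; exists i; split; auto;
    eapply lpow_mono; try eassumption; intros x; apply E.
Qed.

Lemma compl_lang_eq (M N : lang A) : lang_eq M N -> lang_eq (compl M) (compl N).
Proof. intros E w; unfold compl; rewrite (E w); reflexivity. Qed.

Lemma compl_involutive (M : lang A) : lang_eq (compl (compl M)) M.
Proof. intros w; unfold compl; split; [apply NNPP | tauto]. Qed.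

Lemma lang_eq_trans (M N P : lang A) : lang_eq M N -> lang_eq N P -> lang_eq M P.
Proof. intros E1 E2 w; rewrite (E1 w); apply E2. Qed.

End Words.

Theorem mainTheorem9 (Sigma : Type) (L : lang Sigma) (k : closure_kind) :
  (exists w, ~ L w) ->
  closed_under k L ->
  lang_eq (plus (compl L)) (compl L) /\
  closed_under k (plus L) /\
  lang_eq (plus (compl (plus L))) (compl (plus L)) /\
  (forall M, obtainable L M ->
     lang_eq M L \/ lang_eq M (compl L) \/ lang_eq M (plus L) \/
     lang_eq M (compl (plus L))).
Proof.
  intros _ Hclosed.
  pose proof (plus_compl_eq k L Hclosed) as Hcompl.
  pose proof (plus_closed_under k L Hclosed) as Hplus_closed.
  pose proof (plus_compl_eq k (plus L) Hplus_closed) as Hcompl_plus.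
  split; [exact Hcompl | split; [exact Hplus_closed | split; [exact Hcompl_plus |]]].
  intros M HM; induction HM as [| M _ IH | M _ IH].
  - left; intros w; reflexivity.
  - destruct IH as [E | [E | [E | E]]]; apply plus_lang_eq in E.
    + right; right; left; exact E.
    + right; left; exact (lang_eq_trans _ _ _ E Hcompl).
    + right; right; left; exact (lang_eq_trans _ _ _ E (plus_idem L)).
    + right; right; right; exact (lang_eq_trans _ _ _ E Hcompl_plus).
  - destruct IH as [E | [E | [E | E]]]; apply compl_lang_eq in E.
    + right; left; exact E.
    + left; exact (lang_eq_trans _ _ _ E (compl_involutive L)).
    + right; right; right; exact E.
    + right; right; left; exact (lang_eq_trans _ _ _ E (compl_involutive _)).
Qed.
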